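(* Consider the upper half-space model $\mathbb{H}^3=\{(x_1,x_2,x_3)\in\mathbb{R}^3: x_3>0\}$ with metric $g=\frac{1}{x_3^2}(dx_1^2+dx_2^2+dx_3^2)$. Let $E$ be a complete end of revolution in $\mathbb{H}^3$ about the $x_3$-axis, and suppose there is $z>0$ such that $E$ is contained on the horosphere $\{x_3=z\}$, i.e. $E\subset\{x\in\mathbb{H}^3: x_3\ge z\}$. Then $E$ is parabolic.
   Context: A complete end of revolution about the $x_3$-axis is the set $E=\{(\gamma_1(s)\cos\theta,\gamma_1(s)\sin\theta,\gamma_2(s)): s\ge0,\ \theta\in[0,2\pi)\}$, where $\gamma(s)=(\gamma_1(s),0,\gamma_2(s))$, $s\in[0,\infty)$, is a smooth regular curve with $\gamma_1>0$, $\gamma_2>0$ and infinite hyperbolic length; $E$ carries the metric induced by this immersion of $[0,\infty)\times\mathbb{S}^1$. An end $E$ is parabolic if every bounded harmonic function on $E$ is determined by its boundary values. *)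

From Stdlib Require Import Reals Lra.
From Coquelicot Require Import Coquelicot.
Open Scope R_scope.

Definition smooth (f : R -> R) : Prop := forall (n : nat) (x : R), ex_derive_n f n x.

Definition pd_s (f : R -> R -> R) : R -> R -> R :=
  fun s t => Derive (fun s' => f s' t) s.
Definition pd_t (f : R -> R -> R) : R -> R -> R :=
  fun s t => Derive (fun t' => f s t') t.

(* The immersion X(s,theta) = (g1 s cos theta, g1 s sin theta, g2 s) of
   [0,oo) x S^1 into the upper half-space model of H^3. *)
Definition X1 (g1 g2 : R -> R) : R -> R -> R := fun s t => g1 s * cos t.
Definition X2 (g1 g2 : R -> R) : R -> R -> R := fun s t => g1 s * sin t.
Definition X3 (g1 g2 : R -> R) : R -> R -> R := fun s t => g2 s.

(* Coefficients of the metric induced by g = (dx1^2+dx2^2+dx3^2)/x3^2. *)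
Definition metE (g1 g2 : R -> R) (s t : R) : R :=
  (pd_s (X1 g1 g2) s t ^ 2 + pd_s (X2 g1 g2) s t ^ 2 + pd_s (X3 g1 g2) s t ^ 2)
  / (X3 g1 g2 s t ^ 2).
Definition metF (g1 g2 : R -> R) (s t : R) : R :=
  (pd_s (X1 g1 g2) s t * pd_t (X1 g1 g2) s t
   + pd_s (X2 g1 g2) s t * pd_t (X2 g1 g2) s t
   + pd_s (X3 g1 g2) s t * pd_t (X3 g1 g2) s t)
  / (X3 g1 g2 s t ^ 2).
Definition metG (g1 g2 : R -> R) (s t : R) : R :=
  (pd_t (X1 g1 g2) s t ^ 2 + pd_t (X2 g1 g2) s t ^ 2 + pd_t (X3 g1 g2) s t ^ 2)
  / (X3 g1 g2 s t ^ 2).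
Definition metDet (g1 g2 : R -> R) (s t : R) : R :=
  metE g1 g2 s t * metG g1 g2 s t - metF g1 g2 s t ^ 2.

(* Laplace-Beltrami operator of the induced metric in coordinates (s, theta):
   Delta u = 1/sqrt(det g) * sum_{i,j} d_i (sqrt(det g) g^{ij} d_j u). *)
Definition laplacian (g1 g2 : R -> R) (u : R -> R -> R) (s t : R) : R :=
  let sd := fun s t => sqrt (metDet g1 g2 s t) in
  let flux_s := fun s t =>
    sd s t * ((metG g1 g2 s t / metDet g1 g2 s t) * pd_s u s t
              - (metF g1 g2 s t / metDet g1 g2 s t) * pd_t u s t) in
  let flux_t := fun s t =>
    sd s t * (- (metF g1 g2 s t / metDet g1 g2 s t) * pd_s u s t
              + (metE g1 g2 s t / metDet g1 g2 s t) * pd_t u s t) in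
  / sd s t * (pd_s flux_s s t + pd_t flux_t s t).

Definition C2_at (u : R -> R -> R) (s t : R) : Prop :=
  continuity_2d_pt u s t /\
  ex_derive (fun s' => u s' t) s /\ ex_derive (fun t' => u s t') t /\
  continuity_2d_pt (pd_s u) s t /\ continuity_2d_pt (pd_t u) s t /\
  ex_derive (fun s' => pd_s u s' t) s /\ ex_derive (fun t' => pd_s u s t') t /\
  ex_derive (fun s' => pd_t u s' t) s /\ ex_derive (fun t' => pd_t u s t') t /\
  continuity_2d_pt (pd_s (pd_s u)) s t /\ continuity_2d_pt (pd_t (pd_s u)) s t /\
  continuity_2d_pt (pd_s (pd_t u)) s t /\ continuity_2d_pt (pd_t (pd_t u)) s t.

(* A function on E = [0,oo) x S^1 (2pi-periodic in theta), continuous on E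
   (including the boundary s = 0). *)
Definition fun_on_E (u : R -> R -> R) : Prop :=
  (forall s t, 0 <= s -> u s (t + 2 * PI) = u s t) /\
  (forall s0 t0, 0 <= s0 -> forall eps, 0 < eps -> exists delta, 0 < delta /\
     forall s t, 0 <= s -> Rabs (s - s0) < delta -> Rabs (t - t0) < delta ->
       Rabs (u s t - u s0 t0) < eps).

Definition bounded_harmonic (g1 g2 : R -> R) (u : R -> R -> R) : Prop :=
  fun_on_E u /\
  (forall s t, 0 < s -> C2_at u s t /\ laplacian g1 g2 u s t = 0) /\
  (exists M, forall s t, 0 <= s -> Rabs (u s t) <= M).

(* E is parabolic: bounded harmonic functions are determined by their
   boundary values (on the boundary circle s = 0). *)
Definition parabolic (g1 g2 : R -> R) : Prop :=
  forall u v, bounded_harmonic g1 g2 u -> bounded_harmonic g1 g2 v ->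
    (forall t, u 0 t = v 0 t) -> forall s t, 0 <= s -> u s t = v s t.

Definition hyp_length (g1 g2 : R -> R) (S : R) : R :=
  RInt (fun s => sqrt (Derive g1 s ^ 2 + Derive g2 s ^ 2) / g2 s) 0 S.
Definition infinite_hyp_length (g1 g2 : R -> R) : Prop :=
  forall M : R, exists S, 0 <= S /\ M < hyp_length g1 g2 S.

(* Complete end of revolution about the x3-axis, generated by
   gamma = (g1, 0, g2) on [0,oo). *)
Definition complete_end_of_revolution (g1 g2 : R -> R) : Prop :=
  smooth g1 /\ smooth g2 /\
  (forall s, 0 <= s -> 0 < Derive g1 s ^ 2 + Derive g2 s ^ 2) /\
  (forall s, 0 <= s -> 0 < g1 s) /\
  (forall s, 0 <= s -> 0 < g2 s) /\
  infinite_hyp_length g1 g2.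

(* In the coordinates (s, theta) the induced metric is E ds^2 + G dtheta^2, and the
   Laplace equation reads d_s (P d_s u) + Q d_theta^2 u = 0 with P = g1 / |gamma'|.
   Hence h(s) = int_0^s |gamma'| / g1 is a radial harmonic function, and it is unbounded:
   since (ln g1)' <= h', a bound on h would bound g1, and then g2 >= z would bound the
   hyperbolic length int |gamma'| / g2 by (sup g1 / z) h.
   If u, v are bounded harmonic with u <= v at s = 0 but u > v by c somewhere, then
   u - v - eps h + del h^2 satisfies d_s (P d_s .) + Q d_theta^2 . > 0.  With eps h(S)
   beyond the bound of u - v, its maximum over [0, S] x S^1 exceeds c / 2, hence lies
   in the interior, where the second-derivative test forbids it. *)

From Stdlib Require Import Reals Lra Lia ZArith Classical.
From Coquelicot Require Import Coquelicot.
From mathcomp Require all_boot all_order all_algebra all_classical all_reals all_analysis.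
From mathcomp Require Rstruct Rstruct_topology.
Open Scope R_scope.

Lemma is_derive_local_max (f : R -> R) x0 r l :
  0 < r -> (forall x, Rabs (x - x0) < r -> f x <= f x0) -> is_derive f x0 l -> l = 0.
Proof.
intros Hr Hmax Hf. apply is_derive_Reals in Hf.
apply (deriv_maximum f (x0 - r) (x0 + r) x0 (exist _ l Hf)); try lra.
intros x H1 H2. apply Hmax, Rabs_def1; lra.
Qed.

Lemma is_derive_pos_right_of_root (k : R -> R) x0 d :
  is_derive k x0 d -> k x0 = 0 -> 0 < d ->
  exists del, 0 < del /\ forall x, x0 < x < x0 + del -> 0 < k x.
Proof.
intros Hk Hk0 Hd. apply is_derive_Reals in Hk.
destruct (Hk d Hd) as [del Hdel].
exists del. split; [apply cond_pos|].
intros x Hx.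
assert (Hq : Rabs ((k (x0 + (x - x0)) - k x0) / (x - x0) - d) < d).
{ apply Hdel; [lra|]. rewrite Rabs_right; lra. }
replace (x0 + (x - x0)) with x in Hq by ring. rewrite Hk0, Rminus_0_r in Hq.
apply Rabs_def2 in Hq.
assert (Hk' : k x = k x / (x - x0) * (x - x0)) by (field; lra).
rewrite Hk'. apply Rmult_lt_0_compat; lra.
Qed.

Lemma flux_derivative_nonpos_at_max (f f' p k : R -> R) x0 r d :
  0 < r -> (forall x, Rabs (x - x0) < r -> f x <= f x0) ->
  (forall x, Rabs (x - x0) < r -> is_derive f x (f' x)) ->
  (forall x, Rabs (x - x0) < r -> 0 < p x) ->
  (forall x, Rabs (x - x0) < r -> k x = p x * f' x) ->
  is_derive k x0 d -> d <= 0.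
Proof.
intros Hr Hmax Hf Hp Hk Hd.
assert (Hx0 : Rabs (x0 - x0) < r) by (rewrite Rminus_diag, Rabs_R0; lra).
assert (Hf'0 : f' x0 = 0) by exact (is_derive_local_max f x0 r _ Hr Hmax (Hf x0 Hx0)).
assert (Hk0 : k x0 = 0) by (rewrite Hk, Hf'0 by exact Hx0; ring).
apply Rnot_lt_le. intros Hdpos.
(* Otherwise k > 0, hence f' > 0, just right of x0, and f increases past its maximum. *)
destruct (is_derive_pos_right_of_root k x0 d Hd Hk0 Hdpos) as [del [Hdel Hpos]].
set (h := Rmin del r / 2).
assert (Hh : 0 < h < del /\ h < r)
  by (unfold h; assert (H := Rmin_l del r); assert (H' := Rmin_r del r);
      assert (0 < Rmin del r) by (apply Rmin_pos; lra); lra).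
destruct (MVT_cor2 f f' x0 (x0 + h)) as [c [Hfc Hc]]; [lra| |].
- intros c Hc. apply is_derive_Reals, Hf. rewrite Rabs_right; lra.
- assert (Hcr : Rabs (c - x0) < r) by (rewrite Rabs_right; lra).
  assert (Hkc : 0 < p c * f' c) by (rewrite <- Hk by exact Hcr; apply Hpos; lra).
  assert (Hpc := Hp c Hcr).
  assert (Hf'c : 0 < f' c) by nra.
  assert (f (x0 + h) <= f x0) by (apply Hmax; rewrite Rabs_right; lra).
  nra.
Qed.

Module RectangleMax.
Import all_boot all_order all_algebra all_classical all_reals all_analysis.
Import Rstruct Rstruct_topology.
Import Order.TTheory.
Local Open Scope classical_set_scope.
Local Open Scope ring_scope.

Lemma continuous_attains_max (f : R -> R -> R) (a b c d : R) : (a <= b -> c <= d ->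
  (forall x0 y0, a <= x0 <= b -> c <= y0 <= d -> forall eps, 0 < eps ->
    exists delta, 0 < delta /\ forall x y, a <= x <= b -> c <= y <= d ->
      Rabs (x - x0) < delta -> Rabs (y - y0) < delta -> Rabs (f x y - f x0 y0) < eps) ->
  exists x0 y0, a <= x0 <= b /\ c <= y0 <= d /\
    forall x y, a <= x <= b -> c <= y <= d -> f x y <= f x0 y0)%coqR.
Proof.
move=> /RleP ab /RleP cd cont.
pose A := `[a, b] `*` `[c, d].
have A0 : A !=set0 by exists (a, c); split => /=; rewrite in_itv /= lexx ?ab ?cd.
have cA : compact A by apply: compact_setX; exact: segment_compact.
have cF : {within A, continuous (fun p : R * R => f p.1 p.2)}.
  rewrite continuous_subspace_in => -[x0 y0] /set_mem [/=].
  rewrite !in_itv /= => /andP[/RleP h1 /RleP h2] /andP[/RleP h3 /RleP h4].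
  apply/(@cvgrPdist_lt _ R^o) => e /RltP e0.
  have [del [del0 H]] := cont x0 y0 (conj h1 h2) (conj h3 h4) e e0.
  rewrite -nbhs_subspace_in; last by split; rewrite /= in_itv /=; apply/andP; split; apply/RleP.
  apply/nbhs_ballP; exists del => /=; first exact/RltP.
  move=> [x y] [/= /RltP Bx /RltP By] [/=].
  rewrite !in_itv /= => /andP[/RleP k1 /RleP k2] /andP[/RleP k3 /RleP k4].
  apply/RltP; change (Rabs (f x0 y0 - f x y) < e)%coqR.
  by rewrite Rabs_minus_sym; apply: H => //; rewrite Rabs_minus_sym.
have [[x0 y0] /set_mem [/= Hx Hy] Hmax] := compact_EVT_max A0 cA cF.
move: Hx Hy; rewrite !in_itv /= => /andP[/RleP ? /RleP ?] /andP[/RleP ? /RleP ?].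
exists x0, y0; split; [by []|split; [by []|]].
move=> x y [/RleP ? /RleP ?] [/RleP ? /RleP ?]; apply/RleP; apply: (Hmax (x, y)).
by apply/mem_set; split; rewrite /= in_itv /=; apply/andP.
Qed.
End RectangleMax.

Definition continuous_on_halfplane (F : R -> R -> R) : Prop :=
  forall x0 y0, 0 <= x0 -> forall eps, 0 < eps -> exists del, 0 < del /\
    forall x y, 0 <= x -> Rabs (x - x0) < del -> Rabs (y - y0) < del ->
      Rabs (F x y - F x0 y0) < eps.

Lemma continuous_on_halfplane_plus F1 F2 :
  continuous_on_halfplane F1 -> continuous_on_halfplane F2 ->
  continuous_on_halfplane (fun x y => F1 x y + F2 x y).
Proof.
intros H1 H2 x0 y0 Hx0 eps Heps.
destruct (H1 x0 y0 Hx0 (eps / 2)) as [d1 [Hd1 K1]]; [lra|].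
destruct (H2 x0 y0 Hx0 (eps / 2)) as [d2 [Hd2 K2]]; [lra|].
exists (Rmin d1 d2). split; [apply Rmin_pos; lra|].
intros x y Hx Hxd Hyd.
assert (Hm1 := Rmin_l d1 d2). assert (Hm2 := Rmin_r d1 d2).
specialize (K1 x y Hx ltac:(lra) ltac:(lra)). specialize (K2 x y Hx ltac:(lra) ltac:(lra)).
apply Rabs_def2 in K1. apply Rabs_def2 in K2. apply Rabs_def1; lra.
Qed.

Lemma continuous_on_halfplane_opp F :
  continuous_on_halfplane F -> continuous_on_halfplane (fun x y => - F x y).
Proof.
intros H x0 y0 Hx0 eps Heps. destruct (H x0 y0 Hx0 eps Heps) as [d [Hd K]].
exists d. split; [exact Hd|]. intros x y Hx Hxd Hyd.
replace (- F x y - - F x0 y0) with (- (F x y - F x0 y0)) by ring.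
rewrite Rabs_Ropp. auto.
Qed.

Lemma continuous_on_halfplane_of_continuous (f : R -> R) :
  (forall x, continuous f x) -> continuous_on_halfplane (fun x _ => f x).
Proof.
intros Hf x0 y0 Hx0 eps Heps.
destruct (proj2 (continuity_pt_filterlim f x0) (Hf x0) eps Heps) as [del [Hdel K]].
exists del. split; [exact Hdel|]. intros x y Hx Hxd Hyd.
destruct (Req_dec x x0) as [->|Hne].
- rewrite Rminus_diag, Rabs_R0. exact Heps.
- apply (K x). split; [split; [exact I | congruence] | exact Hxd].
Qed.

Definition angle_periodic (u : R -> R -> R) : Prop :=
  forall s t, 0 <= s -> u s (t + 2 * PI) = u s t.

Definition angle_rep (t : R) : R := t - 2 * PI * IZR (Int_part (t / (2 * PI))).

Lemma angle_rep_bounds t : 0 <= angle_rep t <= 2 * PI.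
Proof.
assert (HPI := PI_RGT_0). unfold angle_rep.
destruct (base_Int_part (t / (2 * PI))) as [H1 H2].
assert (Ht : t = 2 * PI * (t / (2 * PI))) by (field; lra).
set (n := IZR (Int_part (t / (2 * PI)))) in *.
set (q := t / (2 * PI)) in *. split; nra.
Qed.

Lemma periodic_shift_nat u s t k : angle_periodic u -> 0 <= s ->
  u s (t + 2 * PI * INR k) = u s t.
Proof.
intros Hu Hs. induction k as [|k IH].
- f_equal. simpl. ring.
- rewrite S_INR. replace (t + 2 * PI * (INR k + 1)) with (t + 2 * PI * INR k + 2 * PI) by ring.
  rewrite Hu by exact Hs. exact IH.
Qed.

Lemma periodic_shift u s t n : angle_periodic u -> 0 <= s ->
  u s (t + 2 * PI * IZR n) = u s t.
Proof.
intros Hu Hs. destruct (Z.le_gt_cases 0 n) as [Hn|Hn].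
- rewrite <- (Z2Nat.id n Hn), <- INR_IZR_INZ. apply periodic_shift_nat; assumption.
- assert (Hm : IZR n = - INR (Z.to_nat (- n)))
    by (rewrite INR_IZR_INZ, Z2Nat.id by lia; rewrite opp_IZR; ring).
  rewrite <- (periodic_shift_nat u s (t + 2 * PI * IZR n) (Z.to_nat (- n)) Hu Hs).
  f_equal. rewrite Hm. ring.
Qed.

Lemma periodic_angle_rep u s t : angle_periodic u -> 0 <= s -> u s (angle_rep t) = u s t.
Proof.
intros Hu Hs. unfold angle_rep. rewrite <- (periodic_shift u s _ (Int_part (t / (2 * PI))) Hu Hs).
f_equal. ring.
Qed.

Definition speed2 (g1 g2 : R -> R) (s : R) : R := Derive g1 s ^ 2 + Derive g2 s ^ 2.
Definition coefE (g1 g2 : R -> R) (s : R) : R := speed2 g1 g2 s / g2 s ^ 2.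
Definition coefG (g1 g2 : R -> R) (s : R) : R := g1 s ^ 2 / g2 s ^ 2.

(* [sqrt (E G) / E] and [sqrt (E G) / G], written exactly as they occur in [laplacian]. *)
Definition flux_coef_s (g1 g2 : R -> R) (s : R) : R :=
  sqrt (coefE g1 g2 s * coefG g1 g2 s) * (coefG g1 g2 s / (coefE g1 g2 s * coefG g1 g2 s)).
Definition flux_coef_t (g1 g2 : R -> R) (s : R) : R :=
  sqrt (coefE g1 g2 s * coefG g1 g2 s) * (coefE g1 g2 s / (coefE g1 g2 s * coefG g1 g2 s)).

Section InducedMetric.
Variables g1 g2 : R -> R.

Lemma pd_s_X1 s t : pd_s (X1 g1 g2) s t = Derive g1 s * cos t.
Proof. apply Derive_scal_l. Qed.
Lemma pd_s_X2 s t : pd_s (X2 g1 g2) s t = Derive g1 s * sin t.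
Proof. apply Derive_scal_l. Qed.
Lemma pd_t_X1 s t : pd_t (X1 g1 g2) s t = - g1 s * sin t.
Proof. apply is_derive_unique. unfold X1. auto_derive; [exact I | ring]. Qed.
Lemma pd_t_X2 s t : pd_t (X2 g1 g2) s t = g1 s * cos t.
Proof. apply is_derive_unique. unfold X2. auto_derive; [exact I | ring]. Qed.
Lemma pd_t_X3 s t : pd_t (X3 g1 g2) s t = 0.
Proof. unfold pd_t, X3. apply Derive_const. Qed.

Lemma cos2_sin2 t : cos t ^ 2 + sin t ^ 2 = 1.
Proof. rewrite <- (sin2_cos2 t). unfold Rsqr. ring. Qed.

Lemma metE_rev s t : metE g1 g2 s t = coefE g1 g2 s.
Proof.
unfold metE, coefE, speed2. rewrite pd_s_X1, pd_s_X2. unfold pd_s, X3. f_equal.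
change (Derive (fun s' => g2 s') s) with (Derive g2 s).
transitivity (Derive g1 s ^ 2 * (cos t ^ 2 + sin t ^ 2) + Derive g2 s ^ 2); [ring|].
rewrite cos2_sin2. ring.
Qed.

Lemma metF_rev s t : metF g1 g2 s t = 0.
Proof.
unfold metF. rewrite pd_s_X1, pd_s_X2, pd_t_X1, pd_t_X2, pd_t_X3. unfold Rdiv. ring.
Qed.

Lemma metG_rev s t : metG g1 g2 s t = coefG g1 g2 s.
Proof.
unfold metG, coefG. rewrite pd_t_X1, pd_t_X2, pd_t_X3. unfold X3. f_equal.
transitivity (g1 s ^ 2 * (cos t ^ 2 + sin t ^ 2)); [ring|].
rewrite cos2_sin2. ring.
Qed.

Lemma metDet_rev s t : metDet g1 g2 s t = coefE g1 g2 s * coefG g1 g2 s.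
Proof. unfold metDet. rewrite metE_rev, metF_rev, metG_rev. ring. Qed.

Lemma laplacian_rev u s t :
  laplacian g1 g2 u s t =
  / sqrt (coefE g1 g2 s * coefG g1 g2 s) *
    (Derive (fun s' => flux_coef_s g1 g2 s' * pd_s u s' t) s
     + flux_coef_t g1 g2 s * pd_t (pd_t u) s t).
Proof.
unfold laplacian. cbv zeta. rewrite metDet_rev. f_equal. f_equal.
- apply Derive_ext. intros s'. rewrite metDet_rev, metF_rev, metG_rev.
  unfold flux_coef_s, Rdiv. ring.
- change (pd_t (pd_t u) s t) with (Derive (fun t' => pd_t u s t') t).
  rewrite <- Derive_scal. apply Derive_ext. intros t'.
  rewrite metDet_rev, metF_rev, metE_rev. unfold flux_coef_t, Rdiv. ring.
Qed.

Lemma harmonic_flux_eq u s t :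
  laplacian g1 g2 u s t = 0 -> 0 < coefE g1 g2 s * coefG g1 g2 s ->
  Derive (fun s' => flux_coef_s g1 g2 s' * pd_s u s' t) s
  = - (flux_coef_t g1 g2 s * pd_t (pd_t u) s t).
Proof.
intros Hu HEG. rewrite laplacian_rev in Hu.
apply Rmult_integral in Hu. destruct Hu as [Hu|Hu]; [|lra].
exfalso. revert Hu. apply Rinv_neq_0_compat, Rgt_not_eq, sqrt_lt_R0, HEG.
Qed.
End InducedMetric.

Section RadialHarmonic.
Variables g1 g2 : R -> R.
Hypothesis Hend : complete_end_of_revolution g1 g2.

Lemma ex_derive_g1 x : ex_derive g1 x.
Proof. exact (proj1 Hend 1%nat x). Qed.
Lemma ex_derive_g2 x : ex_derive g2 x.
Proof. exact (proj1 (proj2 Hend) 1%nat x). Qed.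
Lemma ex_derive_Derive_g1 x : ex_derive (Derive g1) x.
Proof. exact (proj1 Hend 2%nat x). Qed.
Lemma ex_derive_Derive_g2 x : ex_derive (Derive g2) x.
Proof. exact (proj1 (proj2 Hend) 2%nat x). Qed.

Lemma speed2_pos s : 0 <= s -> 0 < speed2 g1 g2 s.
Proof. apply Hend. Qed.
Lemma g1_pos s : 0 <= s -> 0 < g1 s.
Proof. apply Hend. Qed.
Lemma g2_pos s : 0 <= s -> 0 < g2 s.
Proof. apply Hend. Qed.

Lemma coefEG_pos s : 0 <= s -> 0 < coefE g1 g2 s * coefG g1 g2 s.
Proof.
intros Hs. assert (H1 := g1_pos s Hs). assert (H2 := g2_pos s Hs).
apply Rmult_lt_0_compat; apply Rdiv_lt_0_compat; try apply pow_lt; auto.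
apply speed2_pos, Hs.
Qed.

Lemma flux_coef_s_pos s : 0 <= s -> 0 < flux_coef_s g1 g2 s.
Proof.
intros Hs. assert (H := coefEG_pos s Hs).
assert (HG : 0 < coefG g1 g2 s)
  by (apply Rdiv_lt_0_compat; apply pow_lt; [apply g1_pos | apply g2_pos]; exact Hs).
apply Rmult_lt_0_compat; [apply sqrt_lt_R0, H | apply Rdiv_lt_0_compat; assumption].
Qed.

Lemma flux_coef_t_pos s : 0 <= s -> 0 < flux_coef_t g1 g2 s.
Proof.
intros Hs. assert (H := coefEG_pos s Hs).
assert (HE : 0 < coefE g1 g2 s)
  by (apply Rdiv_lt_0_compat; [apply speed2_pos | apply pow_lt, g2_pos]; exact Hs).
apply Rmult_lt_0_compat; [apply sqrt_lt_R0, H | apply Rdiv_lt_0_compat; assumption].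
Qed.

Lemma ex_derive_flux_coef_s s : 0 <= s -> ex_derive (flux_coef_s g1 g2) s.
Proof.
intros Hs. assert (H1 := coefEG_pos s Hs). assert (H2 := g2_pos s Hs).
unfold flux_coef_s, coefE, coefG, speed2 in *. simpl in H1. auto_derive.
repeat split; try (apply ex_derive_g1 || apply ex_derive_g2
                   || apply ex_derive_Derive_g1 || apply ex_derive_Derive_g2); try lra; nra.
Qed.

(* Evaluated at [|s|] only to make it continuous on all of R; it is [1 / flux_coef_s] for [s >= 0]. *)
Definition radial_density (s : R) : R := / flux_coef_s g1 g2 (Rabs s).
Definition radial_harmonic (s : R) : R := RInt radial_density 0 s.

Lemma radial_density_pos x : 0 < radial_density x.
Proof. apply Rinv_0_lt_compat, flux_coef_s_pos, Rabs_pos. Qed.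

Lemma radial_density_continuous x : continuous radial_density x.
Proof.
apply (continuous_comp Rabs (fun y => / flux_coef_s g1 g2 y)); [apply continuous_Rabs|].
apply (@ex_derive_continuous R_AbsRing R_NormedModule), ex_derive_inv.
- apply ex_derive_flux_coef_s, Rabs_pos.
- apply Rgt_not_eq, flux_coef_s_pos, Rabs_pos.
Qed.

Lemma ex_RInt_radial_density a b : ex_RInt radial_density a b.
Proof.
apply (@ex_RInt_continuous R_CompleteNormedModule). intros x _.
apply radial_density_continuous.
Qed.

Lemma flux_radial_density s : 0 <= s -> flux_coef_s g1 g2 s * radial_density s = 1.
Proof.
intros Hs. unfold radial_density. rewrite Rabs_right by lra.
field. apply Rgt_not_eq, flux_coef_s_pos, Hs.
Qed.

Lemma radial_density_eq s : 0 <= s -> radial_density s = sqrt (speed2 g1 g2 s) / g1 s.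
Proof.
intros Hs. unfold radial_density, flux_coef_s, coefE, coefG. rewrite Rabs_right by lra.
assert (HA := speed2_pos s Hs). assert (H1 := g1_pos s Hs). assert (H2 := g2_pos s Hs).
assert (HsqA := sqrt_lt_R0 _ HA). assert (Hsq2 := sqrt_sqrt _ (Rlt_le _ _ HA)).
replace (speed2 g1 g2 s / g2 s ^ 2 * (g1 s ^ 2 / g2 s ^ 2))
  with ((sqrt (speed2 g1 g2 s) * g1 s / g2 s ^ 2) ^ 2)
  by (rewrite <- Hsq2 at 2; field; lra).
rewrite sqrt_pow2 by (apply Rdiv_le_0_compat; [nra | apply pow_lt; lra]).
field. repeat split; lra.
Qed.

Lemma is_derive_radial_harmonic x : is_derive radial_harmonic x (radial_density x).
Proof.
apply (@is_derive_RInt R_CompleteNormedModule radial_density _ 0).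
- apply filter_forall. intros b. apply (@RInt_correct R_CompleteNormedModule), ex_RInt_radial_density.
- apply radial_density_continuous.
Qed.

Lemma radial_harmonic_0 : radial_harmonic 0 = 0.
Proof. unfold radial_harmonic. rewrite RInt_point. reflexivity. Qed.

Lemma radial_harmonic_le a b : a <= b -> radial_harmonic a <= radial_harmonic b.
Proof.
intros Hab. unfold radial_harmonic.
rewrite <- (@RInt_Chasles R_CompleteNormedModule radial_density 0 a b)
  by apply ex_RInt_radial_density.
assert (0 <= RInt radial_density a b).
{ apply RInt_ge_0; [exact Hab | apply ex_RInt_radial_density |].
  intros x _. left. apply radial_density_pos. }
simpl. unfold plus. simpl. lra.
Qed.

Lemma radial_harmonic_ge0 s : 0 <= s -> 0 <= radial_harmonic s.
Proof. intros Hs. rewrite <- radial_harmonic_0. apply radial_harmonic_le, Hs. Qed.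

Lemma ln_g1_le_radial_harmonic s : 0 <= s -> ln (g1 s) - ln (g1 0) <= radial_harmonic s.
Proof.
intros Hs.
assert (Hc : forall x, 0 <= x <= s -> continuous (fun x => Derive g1 x / g1 x) x).
{ intros x Hx. assert (H1 := g1_pos x (proj1 Hx)).
  apply (@ex_derive_continuous R_AbsRing R_NormedModule).
  auto_derive. repeat split; try (apply ex_derive_Derive_g1 || apply ex_derive_g1); lra. }
assert (HI : is_RInt (fun x => Derive g1 x / g1 x) 0 s (minus (ln (g1 s)) (ln (g1 0)))).
{ apply (@is_RInt_derive R_CompleteNormedModule (fun x => ln (g1 x)));
    intros x Hx; rewrite Rmin_left, Rmax_right in Hx by lra; [|apply Hc, Hx].
  assert (H1 := g1_pos x (proj1 Hx)).
  auto_derive; [split; [apply ex_derive_g1 | lra] |].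
  change (Derive (fun y => g1 y) x) with (Derive g1 x). field. lra. }
replace (ln (g1 s) - ln (g1 0)) with (RInt (fun x => Derive g1 x / g1 x) 0 s)
  by exact (is_RInt_unique _ _ _ _ HI).
apply RInt_le; [exact Hs | exists (minus (ln (g1 s)) (ln (g1 0))); exact HI
               | apply ex_RInt_radial_density |].
intros x Hx. rewrite radial_density_eq by lra.
assert (H1 := g1_pos x ltac:(lra)).
apply Rmult_le_compat_r; [left; apply Rinv_0_lt_compat, H1|].
apply Rle_trans with (Rabs (Derive g1 x)); [apply Rle_abs|].
rewrite <- sqrt_Rsqr_abs. apply sqrt_le_1_alt. unfold speed2, Rsqr. nra.
Qed.

Variable z : R.
Hypothesis z_pos : 0 < z.
Hypothesis g2_ge_z : forall s, 0 <= s -> z <= g2 s.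

Lemma g1_le_of_radial_harmonic_le K s :
  0 <= s -> radial_harmonic s <= K -> g1 s <= g1 0 * exp K.
Proof.
intros Hs HK. rewrite <- (exp_ln (g1 s)), <- (exp_ln (g1 0)), <- exp_plus
  by (apply g1_pos; lra).
assert (H := ln_g1_le_radial_harmonic s Hs).
destruct (Req_dec (ln (g1 s)) (ln (g1 0) + K)) as [E|E]; [rewrite E; lra|].
left. apply exp_increasing. lra.
Qed.

Lemma hyp_length_le b S : 0 <= S -> (forall s, 0 <= s <= S -> g1 s <= b) ->
  hyp_length g1 g2 S <= b / z * radial_harmonic S.
Proof.
intros HS Hb. unfold hyp_length, radial_harmonic.
assert (Hscal : ex_RInt (fun x => b / z * radial_density x) 0 S)
  by exact (@ex_RInt_scal R_NormedModule radial_density 0 S (b / z) (ex_RInt_radial_density 0 S)).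
replace (b / z * RInt radial_density 0 S) with (RInt (fun x => b / z * radial_density x) 0 S)
  by exact (@RInt_scal R_CompleteNormedModule radial_density 0 S (b / z) (ex_RInt_radial_density 0 S)).
apply RInt_le; [exact HS | | exact Hscal |].
- apply (@ex_RInt_continuous R_CompleteNormedModule). intros x Hx.
  rewrite Rmin_left, Rmax_right in Hx by lra.
  assert (H1 := g2_pos x (proj1 Hx)). assert (H2 := speed2_pos x (proj1 Hx)).
  unfold speed2 in H2. simpl in H2.
  apply (@ex_derive_continuous R_AbsRing R_NormedModule).
  auto_derive. repeat split; try (apply ex_derive_Derive_g1 || apply ex_derive_g1
                                  || apply ex_derive_Derive_g2 || apply ex_derive_g2); lra.
- intros x Hx. rewrite radial_density_eq by lra. fold (speed2 g1 g2 x).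
  assert (H1 := g1_pos x ltac:(lra)). assert (H2 := g2_ge_z x ltac:(lra)).
  assert (H3 := Hb x ltac:(lra)).
  assert (Ha := sqrt_pos (speed2 g1 g2 x)). set (a := sqrt (speed2 g1 g2 x)) in *.
  apply Rle_trans with (a / z).
  { apply Rmult_le_compat_l; [exact Ha|]. apply Rinv_le_contravar; lra. }
  replace (b / z * (a / g1 x)) with (a / z * (b / g1 x)) by (field; lra).
  rewrite <- (Rmult_1_r (a / z)) at 1.
  apply Rmult_le_compat_l; [apply Rdiv_le_0_compat; lra|].
  replace (b / g1 x) with (1 + (b - g1 x) / g1 x) by (field; lra).
  assert (0 <= (b - g1 x) / g1 x) by (apply Rdiv_le_0_compat; lra). lra.
Qed.

Lemma radial_harmonic_unbounded K : exists S, 0 <= S /\ K < radial_harmonic S.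
Proof.
apply NNPP. intros Hnot.
assert (HK : forall S, 0 <= S -> radial_harmonic S <= K)
  by (intros S HS; apply Rnot_lt_le; intros HS'; apply Hnot; exists S; split; assumption).
set (b := g1 0 * exp K).
pose proof Hend as (_ & _ & _ & _ & _ & Hinf).
destruct (Hinf (b / z * K)) as [S [HS Hlen]].
assert (Hle := hyp_length_le b S HS
  (fun s Hs => g1_le_of_radial_harmonic_le K s (proj1 Hs) (HK s (proj1 Hs)))).
assert (Hb : 0 < b) by (apply Rmult_lt_0_compat; [apply g1_pos; lra | apply exp_pos]).
assert (b / z * radial_harmonic S <= b / z * K)
  by (apply Rmult_le_compat_l; [apply Rdiv_le_0_compat; lra | apply HK, HS]).
lra.
Qed.
End RadialHarmonic.

Definition harmonic_on_interior (g1 g2 : R -> R) (u : R -> R -> R) : Prop :=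
  forall s t, 0 < s -> C2_at u s t /\ laplacian g1 g2 u s t = 0.

Section MaximumPrinciple.
Variables g1 g2 : R -> R.
Hypothesis Hend : complete_end_of_revolution g1 g2.

Definition perturbation (eps del s : R) : R :=
  - eps * radial_harmonic g1 g2 s + del * radial_harmonic g1 g2 s ^ 2.

Lemma is_derive_perturbation eps del x :
  is_derive (perturbation eps del) x
    ((- eps + 2 * del * radial_harmonic g1 g2 x) * radial_density g1 g2 x).
Proof.
unfold perturbation. auto_derive.
- split; [|split; [|exact I]]; eexists; apply is_derive_radial_harmonic; exact Hend.
- change (Derive (fun y => radial_harmonic g1 g2 y) x) with (Derive (radial_harmonic g1 g2) x).
  rewrite (is_derive_unique _ _ _ (is_derive_radial_harmonic g1 g2 Hend x)). ring.
Qed.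

Lemma perturbation_0 eps del : perturbation eps del 0 = 0.
Proof. unfold perturbation. rewrite radial_harmonic_0. ring. Qed.

Lemma angular_second_derivative_nonpos_at_max u v s0 t0 :
  harmonic_on_interior g1 g2 u -> harmonic_on_interior g1 g2 v -> 0 < s0 ->
  (forall t, u s0 t - v s0 t <= u s0 t0 - v s0 t0) ->
  pd_t (pd_t u) s0 t0 - pd_t (pd_t v) s0 t0 <= 0.
Proof.
intros Hu Hv Hs0 Hmax.
apply (flux_derivative_nonpos_at_max (fun t => u s0 t - v s0 t)
         (fun t => pd_t u s0 t - pd_t v s0 t) (fun _ => 1)
         (fun t => pd_t u s0 t - pd_t v s0 t) t0 1).
- lra.
- intros t _. apply Hmax.
- intros t _. destruct (Hu s0 t Hs0) as [Cu _]. destruct (Hv s0 t Hs0) as [Cv _].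
  apply (is_derive_minus (fun t => u s0 t) (fun t => v s0 t)); apply Derive_correct;
    [apply Cu | apply Cv].
- intros; lra.
- intros; ring.
- destruct (Hu s0 t0 Hs0) as [Cu _]. destruct (Hv s0 t0 Hs0) as [Cv _].
  apply (is_derive_minus (pd_t u s0) (pd_t v s0)); apply Derive_correct;
    [apply Cu | apply Cv].
Qed.

Lemma radial_flux_derivative_nonpos_at_max u v eps del s0 t0 r :
  harmonic_on_interior g1 g2 u -> harmonic_on_interior g1 g2 v -> 0 < r -> r <= s0 ->
  (forall s, Rabs (s - s0) < r ->
     u s t0 - v s t0 + perturbation eps del s <= u s0 t0 - v s0 t0 + perturbation eps del s0) ->
  Derive (fun s => flux_coef_s g1 g2 s * pd_s u s t0) s0
  - Derive (fun s => flux_coef_s g1 g2 s * pd_s v s t0) s0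
  + 2 * del * radial_density g1 g2 s0 <= 0.
Proof.
intros Hu Hv Hr Hrs0 Hmax.
set (P := flux_coef_s g1 g2).
apply (flux_derivative_nonpos_at_max
         (fun s => u s t0 - v s t0 + perturbation eps del s)
         (fun s => pd_s u s t0 - pd_s v s t0
                   + (- eps + 2 * del * radial_harmonic g1 g2 s) * radial_density g1 g2 s)
         P
         (fun s => P s * pd_s u s t0 - P s * pd_s v s t0
                   + (- eps + 2 * del * radial_harmonic g1 g2 s))
         s0 r _ Hr Hmax).
- intros s Hs. apply Rabs_def2 in Hs.
  destruct (Hu s t0 ltac:(lra)) as [[_ [Cu _]] _].
  destruct (Hv s t0 ltac:(lra)) as [[_ [Cv _]] _].
  apply (is_derive_plus (fun s => u s t0 - v s t0) (perturbation eps del));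
    [apply (is_derive_minus (fun s => u s t0) (fun s => v s t0)); apply Derive_correct
    | apply is_derive_perturbation].
  + exact Cu.
  + exact Cv.
- intros s Hs. apply Rabs_def2 in Hs. apply flux_coef_s_pos; [exact Hend | lra].
- intros s Hs. apply Rabs_def2 in Hs.
  assert (HP := flux_radial_density g1 g2 Hend s ltac:(lra)). fold P in HP.
  transitivity (P s * pd_s u s t0 - P s * pd_s v s t0
                + (- eps + 2 * del * radial_harmonic g1 g2 s) * (P s * radial_density g1 g2 s));
    [rewrite HP | ]; ring.
- destruct (Hu s0 t0 ltac:(lra)) as [[_ [_ [_ [_ [_ [Cu _]]]]]] _].
  destruct (Hv s0 t0 ltac:(lra)) as [[_ [_ [_ [_ [_ [Cv _]]]]]] _].
  assert (HPd := ex_derive_flux_coef_s g1 g2 Hend s0 ltac:(lra)).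
  apply (is_derive_plus (fun s => P s * pd_s u s t0 - P s * pd_s v s t0)
                        (fun s => - eps + 2 * del * radial_harmonic g1 g2 s)).
  { apply (is_derive_minus (fun s => P s * pd_s u s t0) (fun s => P s * pd_s v s t0));
      apply Derive_correct, ex_derive_mult; assumption. }
  auto_derive; [eexists; apply is_derive_radial_harmonic, Hend|].
  change (Derive (fun y => radial_harmonic g1 g2 y) s0) with (Derive (radial_harmonic g1 g2) s0).
  rewrite (is_derive_unique _ _ _ (is_derive_radial_harmonic g1 g2 Hend s0)). ring.
Qed.

Lemma no_interior_max u v eps del s0 t0 r :
  harmonic_on_interior g1 g2 u -> harmonic_on_interior g1 g2 v ->
  0 < del -> 0 < r -> r <= s0 ->
  (forall s, Rabs (s - s0) < r ->
     u s t0 - v s t0 + perturbation eps del s <= u s0 t0 - v s0 t0 + perturbation eps del s0) ->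
  (forall t, u s0 t - v s0 t <= u s0 t0 - v s0 t0) -> False.
Proof.
intros Hu Hv Hdel Hr Hrs0 Hmax_s Hmax_t.
assert (Hs0 : 0 < s0) by lra.
assert (Htt := angular_second_derivative_nonpos_at_max u v s0 t0 Hu Hv Hs0 Hmax_t).
assert (Hss := radial_flux_derivative_nonpos_at_max u v eps del s0 t0 r Hu Hv Hr Hrs0 Hmax_s).
assert (HEG := coefEG_pos g1 g2 Hend s0 ltac:(lra)).
rewrite (harmonic_flux_eq g1 g2 u s0 t0 (proj2 (Hu s0 t0 Hs0)) HEG),
  (harmonic_flux_eq g1 g2 v s0 t0 (proj2 (Hv s0 t0 Hs0)) HEG) in Hss.
assert (HQ := flux_coef_t_pos g1 g2 Hend s0 ltac:(lra)).
assert (0 < del * radial_density g1 g2 s0)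
  by (apply Rmult_lt_0_compat; [exact Hdel | apply radial_density_pos, Hend]).
nra.
Qed.

Variable z : R.
Hypothesis z_pos : 0 < z.
Hypothesis g2_ge_z : forall s, 0 <= s -> z <= g2 s.

Lemma perturbation_parameters c M s1 : 0 < c -> 0 <= s1 ->
  exists eps del S, 0 < eps /\ 0 < del /\ s1 < S /\
    eps * radial_harmonic g1 g2 s1 < c / 2 /\ M + 1 < eps * radial_harmonic g1 g2 S /\
    del * radial_harmonic g1 g2 S ^ 2 < 1 / 2.
Proof.
intros Hc Hs1.
assert (Hh1 := radial_harmonic_ge0 g1 g2 Hend s1 Hs1).
set (h1 := radial_harmonic g1 g2 s1) in *.
set (eps := c / (2 * (h1 + 1))).
assert (Heps : 0 < eps) by (apply Rdiv_lt_0_compat; lra).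
destruct (radial_harmonic_unbounded g1 g2 Hend z z_pos g2_ge_z ((M + 1) / eps))
  as [S0 [HS0 HhS0]].
set (S := Rmax S0 (s1 + 1)).
assert (HhS : (M + 1) / eps < radial_harmonic g1 g2 S)
  by (apply Rlt_le_trans with (radial_harmonic g1 g2 S0);
      [exact HhS0 | apply radial_harmonic_le; [exact Hend | apply Rmax_l]]).
set (hS := radial_harmonic g1 g2 S) in *.
assert (HhS2 := pow2_ge_0 hS).
exists eps, (1 / (2 * (hS ^ 2 + 1))), S. repeat split.
- exact Heps.
- apply Rdiv_lt_0_compat; lra.
- assert (H := Rmax_r S0 (s1 + 1)). unfold S. lra.
- apply (Rmult_lt_reg_r (2 * (h1 + 1))); [lra|].
  unfold eps. replace (c / (2 * (h1 + 1)) * h1 * (2 * (h1 + 1))) with (c * h1) by (field; lra).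
  replace (c / 2 * (2 * (h1 + 1))) with (c * h1 + c) by field. lra.
- apply (Rmult_lt_compat_l eps) in HhS; [|exact Heps].
  replace (eps * ((M + 1) / eps)) with (M + 1) in HhS by (field; lra). exact HhS.
- fold hS. apply (Rmult_lt_reg_r (2 * (hS ^ 2 + 1))); [lra|].
  replace (1 / (2 * (hS ^ 2 + 1)) * hS ^ 2 * (2 * (hS ^ 2 + 1))) with (hS ^ 2) by (field; lra).
  lra.
Qed.

Lemma bounded_harmonic_le u v :
  bounded_harmonic g1 g2 u -> bounded_harmonic g1 g2 v ->
  (forall t, u 0 t <= v 0 t) -> forall s t, 0 <= s -> u s t <= v s t.
Proof.
intros [[Pu Cu] [Hu [Mu HMu]]] [[Pv Cv] [Hv [Mv HMv]]] Hb s1 t1 Hs1.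
apply Rnot_lt_le. intros Hlt.
set (c := u s1 t1 - v s1 t1).
assert (Hc : 0 < c) by (unfold c; lra).
assert (HM : forall s t, 0 <= s -> u s t - v s t <= Mu + Mv).
{ intros s t Hs. assert (H1 := HMu s t Hs). assert (H2 := HMv s t Hs).
  assert (H3 := Rle_abs (u s t)). assert (H4 := Rle_abs (- v s t)). rewrite Rabs_Ropp in H4.
  lra. }
destruct (perturbation_parameters c (Mu + Mv) s1 Hc Hs1)
  as (eps & del & S & Heps & Hdel & HS & Hh1 & HhS & HhS2).
set (G := fun s t => u s t - v s t + perturbation eps del s).
assert (HPI := PI_RGT_0).
assert (HG : continuous_on_halfplane G).
{ apply (continuous_on_halfplane_plus (fun s t => u s t - v s t)
                                      (fun s _ => perturbation eps del s)).
  - apply (continuous_on_halfplane_plus u (fun s t => - v s t)); [exact Cu|].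
    apply continuous_on_halfplane_opp. exact Cv.
  - apply continuous_on_halfplane_of_continuous. intros x.
    apply (@ex_derive_continuous R_AbsRing R_NormedModule).
    eexists. apply is_derive_perturbation. }
destruct (RectangleMax.continuous_attains_max G 0 S 0 (2 * PI)) as (s0 & t0 & Hs0 & Ht0 & Hmax);
  [lra | lra | |].
{ intros x0 y0 Hx0 _ e He. destruct (HG x0 y0 (proj1 Hx0) e He) as [d [Hd K]].
  exists d. split; [exact Hd|]. intros x y Hx _. apply K, Hx. }
assert (HGper : forall s t, 0 <= s -> G s (angle_rep t) = G s t)
  by (intros s t Hs; unfold G; rewrite !periodic_angle_rep by assumption; reflexivity).
assert (HGmax : c / 2 < G s0 t0).
{ apply Rlt_le_trans with (G s1 (angle_rep t1)); [|apply Hmax; [lra | apply angle_rep_bounds]].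
  rewrite HGper by exact Hs1. unfold G, perturbation. fold c.
  assert (0 <= del * radial_harmonic g1 g2 s1 ^ 2) by (apply Rmult_le_pos; [lra | apply pow2_ge_0]).
  lra. }
assert (Hs0pos : 0 < s0).
{ destruct (proj1 Hs0) as [H|H0]; [exact H|]. subst s0.
  unfold G in HGmax. rewrite perturbation_0 in HGmax. specialize (Hb t0). lra. }
assert (Hs0S : s0 < S).
{ destruct (proj2 Hs0) as [H|HS0]; [exact H|]. subst s0.
  unfold G, perturbation in HGmax. specialize (HM S t0 ltac:(lra)). lra. }
assert (Hr1 := Rmin_l s0 (S - s0)). assert (Hr2 := Rmin_r s0 (S - s0)).
apply (no_interior_max u v eps del s0 t0 (Rmin s0 (S - s0)) Hu Hv Hdel).
- apply Rmin_pos; lra.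
- exact Hr1.
- intros s Hs. apply Rabs_def2 in Hs. apply (Hmax s t0); lra.
- intros t. specialize (Hmax s0 (angle_rep t) ltac:(lra) (angle_rep_bounds t)).
  rewrite HGper in Hmax by lra. unfold G in Hmax. lra.
Qed.
End MaximumPrinciple.

Theorem theoremC (g1 g2 : R -> R) (z : R) :
  complete_end_of_revolution g1 g2 ->
  0 < z ->
  (forall s, 0 <= s -> z <= g2 s) ->
  parabolic g1 g2.
Proof.
intros Hend Hz Hzle u v Hu Hv Hb s t Hs.
apply Rle_antisym; apply (bounded_harmonic_le g1 g2 Hend z Hz Hzle); try assumption;
  intros t'; rewrite Hb; apply Rle_refl.
Qed.
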